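(* Consider a run of the Exponential Averaging with Predictions algorithm with parameter $\alpha\ge1$ on an instance of Display Ads with free disposal, with a prediction that is a feasible allocation. Then $$\mathrm{PRD}\ \le\ \sum_a\left((B_a-\ell_a)\,\beta_a^{(T)}+\frac{1}{\alpha_B}\sum_{t\in \mathbf X_a\setminus \mathbf P_a}\left(w_{at}-\beta_a^{(t-1)}\right)+\sum_{t\in\mathbf P_a\cap\mathbf X_a}w_{at}\right),$$ where the outer sum ranges over all advertisers (including the dummy advertiser).
   Context: Display Ads with free disposal: there are real advertisers $a\in\{1,\dots,k\}$ with integer budgets $B_a\ge 1$, plus a dummy advertiser $a=0$ with budget at least the total number of impressions and value $0$ for every impression. Impressions $t=1,\dots,T$ arrive online; when $t$ arrives, the values $w_{at}\ge 0$ for all $a$ are revealed (with $w_{0t}=0$) and $t$ must be assigned immediately to one advertiser. A prediction is a fixed feasible allocation (each impression assigned to one advertiser, each real advertiser $a$ receiving at most $B_a$ impressions); $\mathrm{PRD}(t)$ denotes the advertiser the prediction assigns $t$ to, revealed on arrival of $t$, and $\mathrm{PRD}$ also denotes the total value of the predicted allocation. Algorithm, parameter $\alpha\ge1$: let $B:=\min_a B_a$ over real advertisers, $e_B:=(1+1/B)^B$, $\alpha_B:=B(e_B^{\alpha/B}-1)$, and for each advertiser $e_{B_a}:=(1+1/B_a)^{B_a}$. Initially each advertiser $a$ holds a multiset $S_a$ of $B_a$ zero-value impressions and $\beta_a=0$. When $t$ arrives: $a_P:=\mathrm{PRD}(t)$; $a_E$ is any maximizer of $w_{at}-\beta_a$;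 if $\alpha_B(w_{a_Pt}-\beta_{a_P})\ge w_{a_Et}-\beta_{a_E}$ then $a:=a_P$, else $a:=a_E$. Add $t$ to $S_a$, remove an element of minimum value from $S_a$, and with $w_1\le\dots\le w_{B_a}$ the values in $S_a$ set $\beta_a:=\frac{e_{B_a}^{\alpha/B_a}-1}{e_{B_a}^{\alpha}-1}\sum_{i=1}^{B_a}w_ie_{B_a}^{\alpha(B_a-i)/B_a}$. Notation: $\beta_a^{(t)}$ is the value of $\beta_a$ after processing impression $t$ ($\beta_a^{(0)}=0$); $a^{(t)}$ is the advertiser the algorithm assigns $t$ to; $\mathbf X_a:=\{t: a^{(t)}=a\}$; $\mathbf P_a:=\{t:\mathrm{PRD}(t)=a\}$; $\ell_a:=|\mathbf P_a\cap\mathbf X_a|$. *)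

From HB Require Import structures.
From mathcomp Require Import all_boot all_order all_algebra.
From mathcomp Require Import reals exp.
Set Implicit Arguments. Unset Strict Implicit. Unset Printing Implicit Defensive.
Import Order.TTheory GRing.Theory Num.Theory.
Local Open Scope ring_scope.

(* Advertisers are 'I_k.+1; ord0 is the dummy advertiser, 1..k are real ones.
   Impressions are the natural numbers t = 1..T. *)

Definition eB {R : realType} (n : nat) : R := (1 + n%:R^-1) ^+ n.

Definition alphaB {R : realType} (alpha : R) (B : nat) : R :=
  B%:R * (eB B `^ (alpha / B%:R) - 1).

(* beta computed from the multiset S (of size n) of values held by an
   advertiser with budget n: with w_1 <= ... <= w_n the sorted values,
   (e_n^{alpha/n} - 1)/(e_n^alpha - 1) * sum_{i=1}^n w_i e_n^{alpha (n-i)/n}.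
   Below the index i is 0-based, so w_{i+1} = nth 0 (sort S) i. *)
Definition betaS {R : realType} (alpha : R) (n : nat) (S : seq R) : R :=
  (eB n `^ (alpha / n%:R) - 1) / (eB n `^ alpha - 1) *
  \sum_(i < n) nth 0 (sort <=%R S) i * eB n `^ (alpha * (n - i.+1)%N%:R / n%:R).

Fixpoint Sset {R : realType} (k : nat) (B : 'I_k.+1 -> nat)
    (w : 'I_k.+1 -> nat -> R) (asg : nat -> 'I_k.+1) (a : 'I_k.+1) (t : nat)
    : seq R :=
  match t with
  | 0 => nseq (B a) 0
  | t'.+1 =>
      let S := Sset B w asg a t' in
      if asg t'.+1 == a then behead (sort <=%R (w a t'.+1 :: S)) else S
  end.

Definition beta {R : realType} (k : nat) (alpha : R) (B : 'I_k.+1 -> nat)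
    (w : 'I_k.+1 -> nat -> R) (asg : nat -> 'I_k.+1) (a : 'I_k.+1) (t : nat) : R :=
  betaS alpha (B a) (Sset B w asg a t).

(* B := min over real advertisers of B_a (k >= 1 assumed). *)
Definition Bmin (k : nat) (B : 'I_k.+1 -> nat) : nat :=
  \big[minn/B (inord 1)]_(a < k.+1 | a != ord0) B a.

Definition is_run {R : realType} (k : nat) (alpha : R) (B : 'I_k.+1 -> nat)
    (w : 'I_k.+1 -> nat -> R) (PRD : nat -> 'I_k.+1) (T : nat)
    (asg : nat -> 'I_k.+1) : Prop :=
  forall t, (1 <= t <= T)%N ->
    exists aE : 'I_k.+1,
      (forall a : 'I_k.+1,
         w a t - beta alpha B w asg a t.-1 <= w aE t - beta alpha B w asg aE t.-1) /\
      asg t = (if alphaB alpha (Bmin B) *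
                  (w (PRD t) t - beta alpha B w asg (PRD t) t.-1)
                >= w aE t - beta alpha B w asg aE t.-1
               then PRD t else aE).

From HB Require Import structures.
From mathcomp Require Import all_boot all_order all_algebra.
From mathcomp Require Import reals exp.
Import Order.TTheory GRing.Theory Num.Theory.
Set Implicit Arguments. Unset Strict Implicit. Unset Printing Implicit Defensive.

(* The proof is a charging argument.  Every impression t is charged to
   advertisers so that the charges cover its predicted value w_{PRD(t),t}:
   - if the algorithm follows the prediction, t is charged its value;
   - otherwise the predicted advertiser a_P is charged beta_{a_P}^{(t-1)} and
     the chosen advertiser a_E is charged (w_{a_E t} - beta_{a_E}^{(t-1)})/alpha_B;
     the selection rule  alpha_B (w_{a_P t} - beta_{a_P}) < w_{a_E t} - beta_{a_E}
     says exactly that these two charges cover w_{a_P t}.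
   Summing per advertiser, the beta-charges are bounded using that beta_a only
   grows over time (adding a value and disposing of a minimum raises every
   order statistic of S_a) and that a is predicted at most B_a times, of which
   l_a are followed. *)

Local Open Scope order_scope.

(* Sorting a list with one more element amounts to inserting that element
   into the sorted list; this describes how S_a changes in one step. *)
Section Insertion.
Variables (d : Order.disp_t) (T : orderType d).

Fixpoint ins (x : T) (s : seq T) : seq T :=
  if s is y :: s' then (if x <= y then x :: s else y :: ins x s') else [:: x].

Lemma perm_ins x s : perm_eq (ins x s) (x :: s).
Proof.
elim: s => [|y s IH] //=; case: ifP => _ //.
by rewrite perm_sym -(perm_catCA [:: y] [:: x] s) /= perm_cons perm_sym.
Qed.

Lemma sorted_ins x s : sorted <=%O s -> sorted <=%O (ins x s).
Proof.
elim: s => [|y s IH] //= Hs; case: ifP => [/= ->//|/negbT]; rewrite -ltNge => /ltW yx.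
have := IH (path_sorted Hs); case: s Hs {IH} => [|z s] /=; first by rewrite yx.
by case/andP=> yz _; case: ifP => _ /= ->; rewrite ?yx ?yz.
Qed.

Lemma sort_cons x s : sort <=%O (x :: s) = ins x (sort <=%O s).
Proof.
apply: (sorted_eq le_trans le_anti); rewrite ?sort_sorted ?sorted_ins //.
  exact: le_total.
by rewrite perm_sort perm_sym (permPl (perm_ins _ _)) perm_cons perm_sort.
Qed.

Lemma nth_behead_ins_ge x0 x s : sorted <=%O s ->
  forall i, nth x0 s i <= nth x0 (behead (ins x s)) i.
Proof.
elim: s => [|y s IH] /= Hs i; first by rewrite !nth_nil.
case: ifP => //= /negbT; rewrite -ltNge => /ltW yx.
case: i => [|i] /=; last by rewrite -nth_behead IH ?(path_sorted Hs).
by case: s Hs {IH} => [|z s] //= /andP[yz _]; case: ifP.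
Qed.
End Insertion.

Local Open Scope ring_scope.

Section Weights.
Variable R : realType.

Lemma eB_ge1 n : 1 <= eB n :> R.
Proof. by rewrite /eB exprn_ege1 // lerDl invr_ge0. Qed.

Lemma eB_gt1 n : (0 < n)%N -> 1 < eB n :> R.
Proof. by move=> n0; rewrite /eB exprn_egt1 -?lt0n // ltrDl invr_gt0 ltr0n. Qed.

Lemma betaS_factor_ge0 (alpha : R) n : 0 <= alpha ->
  0 <= (eB n `^ (alpha / n%:R) - 1) / (eB n `^ alpha - 1).
Proof.
move=> a0; rewrite divr_ge0 // subr_ge0 -[X in X <= _](powRr0 (eB n)) ler_powR
  ?eB_ge1 ?divr_ge0 //.
Qed.

Lemma betaS_mono (alpha : R) n S S' : 0 <= alpha ->
  (forall i, nth 0 (sort <=%R S) i <= nth 0 (sort <=%R S') i) ->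
  betaS alpha n S <= betaS alpha n S'.
Proof.
move=> a0 leSS'; rewrite /betaS ler_wpM2l ?betaS_factor_ge0 //.
by apply: ler_sum => i _; rewrite ler_wpM2r ?powR_ge0.
Qed.

Lemma betaS_displace (alpha : R) n S x : 0 <= alpha ->
  betaS alpha n S <= betaS alpha n (behead (sort <=%R (x :: S))).
Proof.
move=> a0; apply: betaS_mono => // i; rewrite sort_cons.
have sortedS : sorted <=%R (sort <=%R S) by apply: sort_sorted; exact: le_total.
have sorted_tail : sorted <=%R (behead (ins x (sort <=%R S))).
  by move: (sorted_ins x sortedS); case: (ins _ _) => //= y l /path_sorted.
by rewrite (sorted_sort le_trans sorted_tail) nth_behead_ins_ge.
Qed.

Lemma betaS_nseq0 (alpha : R) n m : betaS alpha n (nseq m 0) = 0.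
Proof.
rewrite /betaS big1 ?mulr0 // => i _.
case: (ltnP i (size (sort <=%R (nseq m (0 : R))))) => [lti|?]; last first.
  by rewrite nth_default ?mul0r.
by move: (mem_nth 0 lti); rewrite mem_sort => /nseqP[-> _]; rewrite mul0r.
Qed.

Lemma alphaB_gt0 (alpha : R) n : 1 <= alpha -> (1 <= n)%N -> 0 < alphaB alpha n.
Proof.
move=> a1 n1; rewrite /alphaB mulr_gt0 ?ltr0n // subr_gt0.
have eB1 : 1 < eB n :> R by exact: eB_gt1.
have a0 : 0 < alpha / n%:R by rewrite divr_gt0 ?ltr0n // (lt_le_trans ltr01 a1).
rewrite lt_neqAle eq_sym powR_eq1 gt_eqF //= ltNge (ltW (lt_trans ltr01 eB1)) gt_eqF //.
by rewrite -[X in X <= _](powRr0 (eB n)) ler_powR ?(ltW eB1) ?ltW.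
Qed.
End Weights.

Section BetaMonotone.
Variables (R : realType) (k : nat) (alpha : R) (B : 'I_k.+1 -> nat)
  (w : 'I_k.+1 -> nat -> R) (asg : nat -> 'I_k.+1).
Hypothesis alpha_ge0 : 0 <= alpha.

Lemma beta_mono a t t' : (t <= t')%N ->
  beta alpha B w asg a t <= beta alpha B w asg a t'.
Proof.
move/subnK => <-; elim: (t' - t)%N => [|n IH] //=.
apply: le_trans IH _; rewrite /beta /=.
by case: ifP => _ //; exact: betaS_displace.
Qed.

Lemma beta_ge0 a t : 0 <= beta alpha B w asg a t.
Proof. by rewrite -[0](betaS_nseq0 alpha (B a) (B a)) (beta_mono a (leq0n t)). Qed.
End BetaMonotone.

Lemma Bmin_ge1 k (B : 'I_k.+1 -> nat) : (0 < k)%N ->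
  (forall a : 'I_k.+1, a != ord0 -> (1 <= B a)%N) -> (1 <= Bmin B)%N.
Proof.
move=> k0 B_ge1; apply: (big_ind (fun m => 1 <= m)%N) => //.
- by apply: B_ge1; rewrite -val_eqE /= inordK.
- by move=> m n m1 n1; rewrite leq_min m1 n1.
Qed.

Section Run.
Variables (R : realType) (k : nat) (B : 'I_k.+1 -> nat) (T : nat)
  (w : 'I_k.+1 -> nat -> R) (PRD : nat -> 'I_k.+1) (alpha : R)
  (asg : nat -> 'I_k.+1).
Hypothesis alpha_ge1 : 1 <= alpha.
Hypothesis alphaB_pos : 0 < alphaB alpha (Bmin B).
Hypothesis run : is_run alpha B w PRD T asg.

Local Notation beta_ a t := (beta alpha B w asg a t).
Local Notation c := (alphaB alpha (Bmin B))^-1.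

Lemma override_bound t : (1 <= t <= T)%N -> asg t != PRD t ->
  w (PRD t) t <= beta_ (PRD t) t.-1 + c * (w (asg t) t - beta_ (asg t) t.-1).
Proof.
move=> tT asgP; have [aE [_ asgE]] := run tT.
move: asgE; case: ifP => [_ asgE|/negbT]; first by rewrite asgE eqxx in asgP.
rewrite -ltNge => gainP ->; rewrite -lerBlDl ler_pdivlMl //.
exact: ltW.
Qed.

Definition charge (a : 'I_k.+1) (t : nat) : R :=
  (if (PRD t == a) && (asg t != a) then beta_ a t.-1 else 0)
  + (if (asg t == a) && (PRD t != a) then c * (w a t - beta_ a t.-1) else 0)
  + (if (PRD t == a) && (asg t == a) then w a t else 0).

Lemma predicted_value_charged t : (1 <= t <= T)%N ->
  w (PRD t) t <= \sum_(a < k.+1) charge a t.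
Proof.
move=> tT; rewrite (bigD1 (PRD t)) //=.
have [asgP|asgP] := eqVneq (asg t) (PRD t).
  rewrite big1 => [|a /negbTE aP]; last by rewrite /charge asgP eq_sym aP /= !addr0.
  by rewrite /charge asgP eqxx /= !add0r addr0.
rewrite (bigD1 (asg t)) /=; last by rewrite asgP.
rewrite big1 => [|a /andP[aP aA]]; last first.
  by rewrite /charge eq_sym (negbTE aP) eq_sym (negbTE aA) /= !addr0.
rewrite /charge !eqxx (negbTE asgP) eq_sym (negbTE asgP) /= !addr0 !add0r.
exact: override_bound.
Qed.

Lemma charges_bound a :
  (\sum_(1 <= t < T.+1 | PRD t == a) 1 <= B a)%N ->
  \sum_(1 <= t < T.+1) charge a t <=
    ((B a)%:R - (\sum_(1 <= t < T.+1 | (PRD t == a) && (asg t == a)) 1)%N%:R)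
        * beta_ a T
     + c * \sum_(1 <= t < T.+1 | (asg t == a) && (PRD t != a))
            (w a t - beta_ a t.-1)
     + \sum_(1 <= t < T.+1 | (PRD t == a) && (asg t == a)) w a t.
Proof.
move=> loadP; have alpha_ge0 : 0 <= alpha := le_trans ler01 alpha_ge1.
rewrite /charge [X in X <= _]big_split [X in X + _ <= _]big_split /=.
rewrite -!big_mkcond mulr_sumr /=.
rewrite lerD2r lerD2r.
apply: (@le_trans _ _
  (\sum_(1 <= t < T.+1 | (PRD t == a) && (asg t != a)) beta_ a T)).
  rewrite big_nat_cond [X in _ <= X]big_nat_cond.
  apply: ler_sum => t /andP[/andP[_ tT] _]; apply: beta_mono => //.
  by rewrite (leq_trans (leq_pred t)).
rewrite (eq_bigr (fun=> 1 * beta_ a T)) => [|t _]; last by rewrite mul1r.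
rewrite -mulr_suml ler_wpM2r ?beta_ge0 // -(natr_sum _ _ _ (fun=> 1%N)).
rewrite lerBrDr -natrD ler_nat addnC.
by rewrite -(bigID (fun t => asg t == a)) /= in loadP *.
Qed.
End Run.

Theorem lemmaA2 (R : realType) (k : nat) (B : 'I_k.+1 -> nat) (T : nat)
    (w : 'I_k.+1 -> nat -> R) (PRD : nat -> 'I_k.+1) (alpha : R)
    (asg : nat -> 'I_k.+1) :
  (0 < k)%N ->
  (forall a : 'I_k.+1, a != ord0 -> (1 <= B a)%N) ->
  (T <= B ord0)%N ->
  (forall t, (1 <= t <= T)%N -> w ord0 t = 0) ->
  (forall a t, (1 <= t <= T)%N -> 0 <= w a t) ->
  (forall a : 'I_k.+1, a != ord0 ->
     (\sum_(1 <= t < T.+1 | PRD t == a) 1 <= B a)%N) ->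
  1 <= alpha ->
  is_run alpha B w PRD T asg ->
  \sum_(1 <= t < T.+1) w (PRD t) t <=
  \sum_(a < k.+1)
    (((B a)%:R - (\sum_(1 <= t < T.+1 | (PRD t == a) && (asg t == a)) 1)%N%:R)
        * beta alpha B w asg a T
     + (alphaB alpha (Bmin B))^-1 *
         \sum_(1 <= t < T.+1 | (asg t == a) && (PRD t != a))
            (w a t - beta alpha B w asg a t.-1)
     + \sum_(1 <= t < T.+1 | (PRD t == a) && (asg t == a)) w a t).
Proof.
move=> k_gt0 B_ge1 dummy_budget _ _ feasible alpha_ge1 run.
have alphaB_pos : 0 < alphaB alpha (Bmin B).
  by apply: alphaB_gt0 => //; exact: Bmin_ge1.
have load_le a : (\sum_(1 <= t < T.+1 | PRD t == a) 1 <= B a)%N.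
  have [->|a_real] := eqVneq a ord0; last exact: feasible.
  apply: leq_trans dummy_budget; rewrite sum1_count.
  by rewrite (leq_trans (count_size _ _)) // size_iota subn1.
apply: (@le_trans _ _ (\sum_(1 <= t < T.+1) \sum_(a < k.+1)
                          charge B w PRD alpha asg a t)).
  rewrite big_nat_cond [X in _ <= X]big_nat_cond.
  apply: ler_sum => t /andP[tT _].
  exact: predicted_value_charged alphaB_pos run t tT.
rewrite exchange_big /=; apply: ler_sum => a _.
exact: charges_bound.
Qed.
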